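(* Let $(A,\mu,E,\Delta,\epsilon)$ be a weak multiplier bialgebra over a field $k$. The following are equivalent: (1) $E=1$ in $\mathbb M(A\otimes A)$; (2) $\epsilon(ab)=\epsilon(a)\epsilon(b)$ for all $a,b\in A$; (3) $\overline\sqcap^L(a)=\epsilon(a)1$ in $\mathbb M(A)$ for all $a\in A$; (4) $\overline\sqcap^R(a)=\epsilon(a)1$ in $\mathbb M(A)$ for all $a\in A$.
   Context: Let $k$ be a field, $\otimes=\otimes_k$. A non-unital $k$-algebra $A$ with multiplication $\mu(a\otimes b)=ab$ is idempotent if $\mu$ is surjective and has non-degenerate multiplication if ($ab=0\ \forall a$)$\Rightarrow b=0$ and ($ba=0\ \forall a$)$\Rightarrow b=0$. Its multiplier algebra $\mathbb M(A)$ consists of pairs $(\lambda,\rho)$ of linear maps $A\to A$ with $a\lambda(b)=\rho(a)b$ (product $(\lambda',\rho')(\lambda,\rho)=(\lambda'\lambda,\rho\rho')$, unit $1=(\mathrm{id},\mathrm{id})$), containing $A$ as a dense two-sided ideal; $A\otimes A\subseteq\mathbb M(A)\otimes\mathbb M(A)\subseteq\mathbb M(A\otimes A)$. $\langle X\rangle$ is linear span; multiplicative $\gamma:A\to\mathbb M(B)$ with idempotent $e\in\mathbb M(B)$, $\langle\gamma(a)b\rangle=eB$, $\langle b\gamma(a)\rangle=Be$, extends uniquely to multiplicative $\overline\gamma:\mathbb M(A)\to\mathbb M(B)$ with $\overline\gamma(1)=e$. A weak multiplier bialgebra: idempotent $A$ with non-degenerate multiplication, idempotent $E\in\mathbb M(A\otimes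 A)$, multiplicative linear $\Delta:A\to\mathbb M(A\otimes A)$, linear $\epsilon:A\to k$ with: (i) $T_1(a\otimes b):=\Delta(a)(1\otimes b)$, $T_2(a\otimes b):=(a\otimes1)\Delta(b)$ lie in $A\otimes A$; (ii) $(T_2\otimes\mathrm{id})(\mathrm{id}\otimes T_1)=(\mathrm{id}\otimes T_1)(T_2\otimes\mathrm{id})$; (iii) $(\epsilon\otimes\mathrm{id})T_1=\mu=(\mathrm{id}\otimes\epsilon)T_2$; (iv) $\langle\Delta(a)(b\otimes b')\rangle=\langle E(b\otimes b')\rangle$ and $\langle(b\otimes b')\Delta(a)\rangle=\langle(b\otimes b')E\rangle$; (v) $(E\otimes1)(1\otimes E)=E^{(3)}=(1\otimes E)(E\otimes1)$ with $E^{(3)}:=(\overline{\mathrm{id}\otimes\Delta})(E)=(\overline{\Delta\otimes\mathrm{id}})(E)$; (vi) $(\epsilon\otimes\mathrm{id})((1\otimes a)E(b\otimes c))=(\epsilon\otimes\mathrm{id})(\Delta(a)(b\otimes c))$ and $(\epsilon\otimes\mathrm{id})((a\otimes b)E(1\otimes c))=(\epsilon\otimes\mathrm{id})((a\otimes b)\Delta(c))$. For $a\in A$: $\overline\sqcap^L(a)\in\mathbb M(A)$ is the multiplier with $\overline\sqcap^L(a)b=(\epsilon\otimes\mathrm{id})((a\otimes1)\Delta(b))$ and $b\overline\sqcap^L(a)=(\epsilon\otimes\mathrm{id})((a\otimes b)E)$; $\overline\sqcap^R(a)\in\mathbb M(A)$ is the multiplier with $b\overline\sqcap^R(a)=(\mathrm{id}\otimes\epsilon)(\Delta(b)(1\otimes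 a))$ and $\overline\sqcap^R(a)b=(\mathrm{id}\otimes\epsilon)(E(b\otimes a))$. *)

From HB Require Import structures.
From mathcomp Require Import all_boot all_algebra.
From Stdlib Require Import ClassicalEpsilon.
Set Implicit Arguments.
Unset Strict Implicit.
Unset Printing Implicit Defensive.
Import GRing.Theory.
Local Open Scope ring_scope.

Section WMBA.
Variable k : fieldType.

Definition islin (U W : lmodType k) (f : U -> W) :=
  forall (c : k) (x y : U), f (c *: x + y) = c *: f x + f y.

Definition bilin (U V W : lmodType k) (f : U -> V -> W) :=
  (forall v, islin (fun u => f u v)) /\ (forall u, islin (f u)).

(* A tensor product U (x)_k V: a k-vector space with a bilinear map
   (u,v) |-> u (x) v, spanned by simple tensors and satisfying the universal
   property for bilinear maps (hence unique up to unique isomorphism). *)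
Record tensor (U V : lmodType k) := Tensor {
  tsp :> lmodType k;
  tm : U -> V -> tsp;
  tm_bilin : bilin tm;
  tm_span : forall x : tsp, exists s : seq (U * V),
      x = \sum_(p <- s) tm p.1 p.2;
  tm_univ : forall (W : lmodType k) (f : U -> V -> W), bilin f ->
      exists g : tsp -> W, islin g /\ forall u v, g (tm u v) = f u v }.

(* the linear map T -> W induced by a bilinear map f : U -> V -> W
   (computed on a chosen decomposition into simple tensors; well defined
   by the universal property when f is bilinear) *)
Definition tlift (U V : lmodType k) (T : tensor U V) (W : lmodType k)
  (f : U -> V -> W) (x : T) : W :=
  \sum_(p <- proj1_sig (constructive_indefinite_description _ (tm_span x)))
    f p.1 p.2.

Definition inspan (I : Type) (W : lmodType k) (f : I -> W) (x : W) :=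
  exists s : seq (k * I), x = \sum_(p <- s) p.1 *: f p.2.

(* (L,R) is a multiplier of the (non-unital) algebra (T, m):
   L, R linear and  x L(y) = R(x) y *)
Definition is_mult (T : lmodType k) (m : T -> T -> T) (L R : T -> T) :=
  [/\ islin L, islin R & forall x y, m x (L y) = m (R x) y].

Variables (A : lmodType k) (mul : A -> A -> A).
Variables (AA : tensor A A) (A3 : tensor A AA).

Definition t := tm AA.
Definition t3 := tm A3.

Definition mAA (x y : AA) : AA :=
  tlift (fun a b => tlift (fun c d => t (mul a c) (mul b d)) y) x.
Definition m3 (u v : A3) : A3 :=
  tlift (fun a w => tlift (fun a' w' => t3 (mul a a') (mAA w w')) v) u.

Definition mu (x : AA) : A := tlift mul x.

Variable eps : A -> k.
Definition epsl (x : AA) : A := tlift (fun a b => eps a *: b) x.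
Definition epsr (x : AA) : A := tlift (fun a b => eps b *: a) x.

Definition lmul1b (b : A) (y : AA) : AA := tlift (fun p q => t p (mul b q)) y.
Definition rmul1b (b : A) (y : AA) : AA := tlift (fun p q => t p (mul q b)) y.
Definition lmulb1 (b : A) (y : AA) : AA := tlift (fun p q => t (mul b p) q) y.
Definition rmulb1 (b : A) (y : AA) : AA := tlift (fun p q => t (mul p b) q) y.

(* A (x) A (x) A is modelled as A (x) (A (x) A);  (z (x) c) for z in A(x)A *)
Definition reassoc (z : AA) (c : A) : A3 := tlift (fun x y => t3 x (t y c)) z.
Definition ten1 (F : AA -> AA) (g : A -> A) (u : A3) : A3 :=
  tlift (fun a w => tlift (fun b c => reassoc (F (t a b)) (g c)) w) u.
Definition one_ten (g : A -> A) (F : AA -> AA) (u : A3) : A3 :=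
  tlift (fun a w => t3 (g a) (F w)) u.

Variables (EL ER : AA -> AA) (DL DR : A -> AA -> AA).
(* E = (EL,ER) in M(A(x)A);  Delta(a) = (DL a, DR a) in M(A(x)A) *)

(* (id (x) Delta)(x) in M(A(x)A(x)A), left and right actions *)
Definition idDL (x : AA) (u : A3) : A3 :=
  tlift (fun a b => one_ten (mul a) (DL b) u) x.
Definition idDR (x : AA) (u : A3) : A3 :=
  tlift (fun a b => one_ten (fun a' => mul a' a) (DR b) u) x.
(* (Delta (x) id)(x) in M(A(x)A(x)A) *)
Definition DidL (x : AA) (u : A3) : A3 :=
  tlift (fun a b => ten1 (DL a) (mul b) u) x.
Definition DidR (x : AA) (u : A3) : A3 :=
  tlift (fun a b => ten1 (DR a) (fun c => mul c b) u) x.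

(* (YL,YR) = \overline gamma (E) for gamma = (gL,gR) : A(x)A -> M(B) with
   \overline gamma(1) = e = (eL,eR): the unique element with
   \overline gamma(E) gamma(x) = gamma(E x), gamma(x) \overline gamma(E) =
   gamma(x E) and \overline gamma(E) = \overline gamma(E) e = e \overline gamma(E). *)
Definition is_ext (gL gR : AA -> A3 -> A3) (eL eR : A3 -> A3)
  (YL YR : A3 -> A3) :=
  [/\ forall x y, YL (gL x y) = gL (EL x) y,
      forall x y, YR (gR x y) = gR (ER x) y,
      (forall y, YL (eL y) = YL y) /\ (forall y, eL (YL y) = YL y) &
      (forall y, YR (eR y) = YR y) /\ (forall y, eR (YR y) = YR y)].

Variables (T1 T2 : AA -> AA).

Record is_wmba : Prop := {
  mul_bilin : bilin mul;
  mul_assoc : forall a b c, mul a (mul b c) = mul (mul a b) c;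
  A_idem : forall x : A, exists y : AA, mu y = x;
  A_nondeg_l : forall b, (forall a, mul a b = 0) -> b = 0;
  A_nondeg_r : forall b, (forall a, mul b a = 0) -> b = 0;
  E_mult : is_mult mAA EL ER;
  E_idem : (forall x, EL (EL x) = EL x) /\ (forall x, ER (ER x) = ER x);
  D_mult : forall a, is_mult mAA (DL a) (DR a);
  D_lin : forall c a a' y, DL (c *: a + a') y = c *: DL a y + DL a' y /\
                           DR (c *: a + a') y = c *: DR a y + DR a' y;
  D_multiplicative : forall a b y, DL (mul a b) y = DL a (DL b y) /\
                                   DR (mul a b) y = DR b (DR a y);
  eps_lin : forall c a b, eps (c *: a + b) = c * eps a + eps b;
  (* (i): T1(a(x)b) = Delta(a)(1(x)b) and T2(a(x)b) = (a(x)1)Delta(b)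
     lie in A(x)A; T1, T2 are the induced linear maps *)
  T1_lin : islin T1;
  T2_lin : islin T2;
  T1_def : forall a b y, mAA (T1 (t a b)) y = DL a (lmul1b b y) /\
                         mAA y (T1 (t a b)) = rmul1b b (DR a y);
  T2_def : forall a b y, mAA (T2 (t a b)) y = lmulb1 a (DL b y) /\
                         mAA y (T2 (t a b)) = DR b (rmulb1 a y);
  ax_ii : forall u, ten1 T2 id (one_ten id T1 u) = one_ten id T1 (ten1 T2 id u);
  ax_iii : forall x, epsl (T1 x) = mu x /\ epsr (T2 x) = mu x;
  ax_iv_l : forall x, inspan (fun p : A * A * A => DL p.1.1 (t p.1.2 p.2)) x <->
                      inspan (fun p : A * A => EL (t p.1 p.2)) x;
  ax_iv_r : forall x, inspan (fun p : A * A * A => DR p.1.1 (t p.1.2 p.2)) x <->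
                      inspan (fun p : A * A => ER (t p.1 p.2)) x;
  (* (v): E^(3) = \overline{id(x)Delta}(E) = \overline{Delta(x)id}(E)
     and (E(x)1)(1(x)E) = E^(3) = (1(x)E)(E(x)1) *)
  ax_v : exists E3L E3R : A3 -> A3,
    [/\ is_mult m3 E3L E3R,
        is_ext idDL idDR (one_ten id EL) (one_ten id ER) E3L E3R,
        is_ext DidL DidR (ten1 EL id) (ten1 ER id) E3L E3R,
        (forall u, ten1 EL id (one_ten id EL u) = E3L u) /\
        (forall u, one_ten id ER (ten1 ER id u) = E3R u) &
        (forall u, one_ten id EL (ten1 EL id u) = E3L u) /\
        (forall u, ten1 ER id (one_ten id ER u) = E3R u)];
  ax_vi_1 : forall a b c, epsl (lmul1b a (EL (t b c))) = epsl (DL a (t b c));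
  ax_vi_2 : forall a b c, epsl (rmul1b c (ER (t a b))) = epsl (DR c (t a b))
}.

(* \overline\sqcap^L(a) and \overline\sqcap^R(a): left and right actions *)
Definition PiL_l (a b : A) : A := epsl (T2 (t a b)).
Definition PiL_r (a b : A) : A := epsl (ER (t a b)).
Definition PiR_r (a b : A) : A := epsr (T1 (t b a)).
Definition PiR_l (a b : A) : A := epsr (EL (t b a)).

End WMBA.

From Pilot Require Import Defs.
From mathcomp Require Import all_boot all_algebra.
From Stdlib Require Import ClassicalEpsilon Classical.
Set Implicit Arguments.
Unset Strict Implicit.
Unset Printing Implicit Defensive.
Import GRing.Theory.
Local Open Scope ring_scope.

(* (1) => (2): with E = 1, axiom (vi) and the counit axiom (iii) give
   eps(a'(ac)) = eps(a'a) eps(c), and A = A^2 turns this into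
   eps(xc) = eps(x) eps(c).
   (2) => (3), (4): if eps is multiplicative then eps (x) id and id (x) eps
   turn products in A (x) A into products in A, so (iii) and (vi) compute
   both legs of the multipliers Pi^L(a), Pi^R(a) as eps(a) 1; conversely
   applying eps to (3) or (4) and using (iii) gives back (2).
   (2) => (1): evaluate E^(3) (Delta (x) id)(x) on a simple tensor in the
   two ways allowed by axiom (v): as (1 (x) E)(E (x) 1), where E (x) 1 acts
   trivially because E Delta = Delta, and by the extension property of
   E^(3).  Applying eps (x) id (x) id, resp. id (x) eps (x) id, to both
   outcomes yields eps(e) E (x y) = eps(e) (E x) y and
   eps(e) (E x) y = eps(e) x y for simple y, where e with eps(e) <> 0 exists
   unless A = 0.  Since A (x) A is spanned by products of simple tensors,
   E x = x; the right action of E is symmetric. *)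

Section LinearMaps.
Variable k : fieldType.
Implicit Types U V W : lmodType k.

Lemma lin0 U W (f : U -> W) : islin f -> f 0 = 0.
Proof.
move=> Hf; have := Hf 1 0 0; rewrite !scale1r addr0 => E.
by apply: (addrI (f 0)); rewrite addr0 -E.
Qed.

Lemma linD U W (f : U -> W) x y : islin f -> f (x + y) = f x + f y.
Proof. by move=> Hf; have := Hf 1 x y; rewrite !scale1r. Qed.

Lemma linZ U W (f : U -> W) c x : islin f -> f (c *: x) = c *: f x.
Proof. by move=> Hf; have := Hf c x 0; rewrite !addr0 (lin0 Hf) addr0. Qed.

Lemma linB U W (f : U -> W) x y : islin f -> f (x - y) = f x - f y.
Proof. by move=> Hf; rewrite linD // -scaleN1r linZ // scaleN1r. Qed.

Lemma lin_sum U W (f : U -> W) (I : Type) (s : seq I) F :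
  islin f -> f (\sum_(i <- s) F i) = \sum_(i <- s) f (F i).
Proof.
move=> Hf; elim: s => [|i s IH]; first by rewrite !big_nil lin0.
by rewrite !big_cons linD // IH.
Qed.

Lemma islin_id U : islin (fun x : U => x).
Proof. by []. Qed.

Lemma islin_comp U V W (f : V -> W) (g : U -> V) :
  islin f -> islin g -> islin (fun x => f (g x)).
Proof. by move=> Hf Hg c x y; rewrite Hg Hf. Qed.

Lemma islin_scale U W (f : U -> W) (c : k) : islin f -> islin (fun x => c *: f x).
Proof. by move=> Hf a x y; rewrite Hf scalerDr !scalerA mulrC. Qed.

Lemma bilin_comp U V (P Q W : lmodType k) (f : P -> Q -> W) (g : U -> P) (h : V -> Q) :
  bilin f -> islin g -> islin h -> bilin (fun u v => f (g u) (h v)).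
Proof.
move=> [Hf1 Hf2] Hg Hh; split=> [v|u] c x y /=.
- by rewrite Hg Hf1.
- by rewrite Hh Hf2.
Qed.

End LinearMaps.

Section TensorLift.
Variables (k : fieldType) (U V : lmodType k) (T : tensor U V).
Implicit Type W : lmodType k.

Lemma tensor_ext W (g1 g2 : T -> W) :
  islin g1 -> islin g2 -> (forall u v, g1 (tm T u v) = g2 (tm T u v)) ->
  forall x, g1 x = g2 x.
Proof.
move=> H1 H2 H x; have [s ->] := tm_span x.
by rewrite !lin_sum //; apply: eq_bigr => p _.
Qed.

Lemma tensor_trivial : (forall u : U, u = 0) -> forall x : T, x = 0.
Proof.
move=> U0; apply: (tensor_ext (g2 := fun _ => 0)) => [//||u v].
- by move=> c y z; rewrite scaler0 addr0.
- by rewrite (U0 u) (lin0 (proj1 (tm_bilin T) v)).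
Qed.

Lemma tlift_linE W (f : U -> V -> W) (g : T -> W) :
  islin g -> (forall u v, g (tm T u v) = f u v) -> forall x, tlift f x = g x.
Proof.
move=> Hg Hgf x; rewrite /tlift; case: constructive_indefinite_description => s /= ->.
by rewrite lin_sum //; apply: eq_bigr => p _; rewrite Hgf.
Qed.

Lemma tlift_tm W (f : U -> V -> W) : bilin f ->
  forall u v, tlift (T:=T) f (tm T u v) = f u v.
Proof.
move=> Hf u v; have [g [Hg Hgf]] := tm_univ T Hf.
by rewrite (tlift_linE Hg Hgf).
Qed.

Lemma tlift_lin W (f : U -> V -> W) : bilin f -> islin (tlift (T:=T) f).
Proof.
move=> Hf; have [g [Hg Hgf]] := tm_univ T Hf.
by move=> c x y; rewrite !(tlift_linE Hg Hgf).
Qed.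

Lemma eq_tlift W (f g : U -> V -> W) (x : T) :
  (forall u v, f u v = g u v) -> tlift f x = tlift g x.
Proof. by move=> Hfg; rewrite /tlift; apply: eq_bigr => p _; rewrite Hfg. Qed.

Lemma tlift_comp W W' (L : W -> W') (f : U -> V -> W) (x : T) :
  islin L -> L (tlift f x) = tlift (fun u v => L (f u v)) x.
Proof. by move=> HL; rewrite /tlift lin_sum. Qed.

Lemma tliftZ W (f : U -> V -> W) (c : k) (x : T) :
  tlift (fun u v => c *: f u v) x = c *: tlift f x.
Proof. by rewrite /tlift scaler_sumr. Qed.

Lemma tliftDZ W (f g : U -> V -> W) (c : k) (x : T) :
  tlift (fun u v => c *: f u v + g u v) x = c *: tlift f x + tlift g x.
Proof. by rewrite /tlift big_split /= scaler_sumr. Qed.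

Lemma islin_tlift_param (Y W : lmodType k) (G : U -> V -> Y -> W) (x : T) :
  (forall u v, islin (G u v)) -> islin (fun y => tlift (fun u v => G u v y) x).
Proof. by move=> HG c y y'; rewrite -tliftDZ; apply: eq_tlift => u v; apply: HG. Qed.

Lemma bilin_tlift_param (P Q W : lmodType k) (F : P -> Q -> U -> V -> W) (x : T) :
  (forall u v, bilin (fun p q => F p q u v)) -> bilin (fun p q => tlift (F p q) x).
Proof.
move=> HF; split=> [q|p] c y y'; rewrite -tliftDZ; apply: eq_tlift => u v.
- exact: (proj1 (HF u v) q).
- exact: (proj2 (HF u v) p).
Qed.

Lemma bilin_tlift (P W : lmodType k) (G : P -> U -> V -> W) :
  (forall p, bilin (G p)) -> (forall u v, islin (fun p => G p u v)) ->
  bilin (fun p (x : T) => tlift (G p) x).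
Proof.
move=> HG HG'; split=> [x c p p'|p]; last exact: tlift_lin.
by rewrite -tliftDZ; apply: eq_tlift => u v; apply: HG'.
Qed.

End TensorLift.

Section WeakMultiplierBialgebra.
Variables (k : fieldType) (A : lmodType k) (mul : A -> A -> A)
  (AA : tensor A A) (A3 : tensor A AA)
  (EL ER : AA -> AA) (DL DR : A -> AA -> AA) (eps : A -> k)
  (T1 T2 : AA -> AA).
Hypothesis H : is_wmba mul A3 eps EL ER DL DR T1 T2.

Local Notation ten := (t AA).
Local Notation ten3 := (t3 A3).
Local Notation mAA := (mAA mul (AA:=AA)).
Local Notation el := (epsl eps (AA:=AA)).
Local Notation er := (epsr eps (AA:=AA)).

Lemma mulA_linr a : islin (mul a). Proof. exact: (proj2 (mul_bilin H) a). Qed.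
Lemma mulA_linl b : islin (mul^~ b). Proof. exact: (proj1 (mul_bilin H) b). Qed.
Lemma ten_linl v : islin (ten^~ v). Proof. exact: (proj1 (tm_bilin AA) v). Qed.
Lemma ten_linr u : islin (ten u). Proof. exact: (proj2 (tm_bilin AA) u). Qed.
Lemma ten3_linr u : islin (ten3 u). Proof. exact: (proj2 (tm_bilin A3) u). Qed.
Lemma EL_lin : islin EL. Proof. by case: (E_mult H). Qed.
Lemma ER_lin : islin ER. Proof. by case: (E_mult H). Qed.
Lemma DL_lin a : islin (DL a). Proof. by case: (D_mult H a). Qed.
Lemma DR_lin a : islin (DR a). Proof. by case: (D_mult H a). Qed.
Lemma id_lin : islin (@id A). Proof. by []. Qed.
Lemma eps_linear : islin (eps : A -> k^o). Proof. by move=> c x y; apply: (eps_lin H). Qed.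

Lemma epsZ c x : eps (c *: x) = c * eps x.
Proof. exact: (linZ _ _ eps_linear). Qed.

Lemma bilin_ten : bilin ten. Proof. exact: tm_bilin. Qed.

Lemma bilin_ten_mulr a b : bilin (fun c d => ten (mul a c) (mul b d)).
Proof. exact: (bilin_comp bilin_ten (mulA_linr a) (mulA_linr b)). Qed.

Lemma bilin_ten_mull c d : bilin (fun a b => ten (mul a c) (mul b d)).
Proof. exact: (bilin_comp bilin_ten (mulA_linl c) (mulA_linl d)). Qed.

Lemma bilin_mAA_outer (y : AA) :
  bilin (fun a b => tlift (fun c d => ten (mul a c) (mul b d)) y).
Proof. by apply: bilin_tlift_param => u v; apply: bilin_ten_mull. Qed.

Lemma mAA_tenl a b y : mAA (ten a b) y = tlift (fun c d => ten (mul a c) (mul b d)) y.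
Proof. by rewrite /Defs.mAA /t tlift_tm //; apply: bilin_mAA_outer. Qed.

Lemma mAA_tenr x c d : mAA x (ten c d) = tlift (fun a b => ten (mul a c) (mul b d)) x.
Proof.
by rewrite /Defs.mAA; apply: eq_tlift => a b; rewrite /t tlift_tm //; apply: bilin_ten_mulr.
Qed.

Lemma mAA_ten a b c d : mAA (ten a b) (ten c d) = ten (mul a c) (mul b d).
Proof. by rewrite mAA_tenl /t tlift_tm //; apply: bilin_ten_mulr. Qed.

Lemma mAA_linl y : islin (mAA^~ y).
Proof. exact: tlift_lin (bilin_mAA_outer y). Qed.

Lemma mAA_linr x : islin (mAA x).
Proof. by apply: islin_tlift_param => a b; apply: tlift_lin; apply: bilin_ten_mulr. Qed.

Lemma bilin_eps_scale (W : lmodType k) : bilin (fun a (w : W) => eps a *: w).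
Proof.
split=> [w|a] c x y /=; first by rewrite (eps_lin H) scalerDl scalerA.
by rewrite scalerDr !scalerA mulrC.
Qed.

Lemma bilin_epsr : bilin (fun (a : A) b => eps b *: a).
Proof.
split=> [b|a] c x y /=; first by rewrite scalerDr !scalerA mulrC.
by rewrite (eps_lin H) scalerDl scalerA.
Qed.

Lemma epsl_ten a b : el (ten a b) = eps a *: b.
Proof. by rewrite /epsl /t tlift_tm //; apply: bilin_eps_scale. Qed.
Lemma epsr_ten a b : er (ten a b) = eps b *: a.
Proof. by rewrite /epsr /t tlift_tm //; apply: bilin_epsr. Qed.
Lemma epsl_lin : islin el. Proof. exact: tlift_lin (bilin_eps_scale A). Qed.
Lemma epsr_lin : islin er. Proof. exact: tlift_lin bilin_epsr. Qed.

Lemma mu_ten a b : mu mul (ten a b) = mul a b.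
Proof. by rewrite /mu /t tlift_tm //; apply: mul_bilin H. Qed.
Lemma mu_lin : islin (mu mul (AA:=AA)). Proof. exact: tlift_lin (mul_bilin H). Qed.

Lemma bilin_ten_mul1r b : bilin (fun p q => ten p (mul b q)).
Proof. exact: (bilin_comp (g := fun x => x) bilin_ten id_lin (mulA_linr b)). Qed.
Lemma bilin_ten_mul1l b : bilin (fun p q => ten p (mul q b)).
Proof. exact: (bilin_comp (g := fun x => x) bilin_ten id_lin (mulA_linl b)). Qed.
Lemma bilin_ten_mulr1 b : bilin (fun p q => ten (mul b p) q).
Proof. exact: (bilin_comp (h := fun x => x) bilin_ten (mulA_linr b) id_lin). Qed.
Lemma bilin_ten_mull1 b : bilin (fun p q => ten (mul p b) q).
Proof. exact: (bilin_comp (h := fun x => x) bilin_ten (mulA_linl b) id_lin). Qed.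

Lemma lmul1b_ten b p q : lmul1b mul b (ten p q) = ten p (mul b q).
Proof. by rewrite /lmul1b /t tlift_tm //; apply: bilin_ten_mul1r. Qed.
Lemma lmul1b_lin b : islin (lmul1b mul b (AA:=AA)).
Proof. exact: tlift_lin (bilin_ten_mul1r b). Qed.
Lemma rmul1b_ten b p q : rmul1b mul b (ten p q) = ten p (mul q b).
Proof. by rewrite /rmul1b /t tlift_tm //; apply: bilin_ten_mul1l. Qed.
Lemma rmul1b_lin b : islin (rmul1b mul b (AA:=AA)).
Proof. exact: tlift_lin (bilin_ten_mul1l b). Qed.
Lemma lmulb1_ten b p q : lmulb1 mul b (ten p q) = ten (mul b p) q.
Proof. by rewrite /lmulb1 /t tlift_tm //; apply: bilin_ten_mulr1. Qed.
Lemma lmulb1_lin b : islin (lmulb1 mul b (AA:=AA)).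
Proof. exact: tlift_lin (bilin_ten_mulr1 b). Qed.
Lemma rmulb1_ten b p q : rmulb1 mul b (ten p q) = ten (mul p b) q.
Proof. by rewrite /rmulb1 /t tlift_tm //; apply: bilin_ten_mull1. Qed.

Lemma bilin_reassoc_inner (c : A) : bilin (fun x y => ten3 x (ten y c)).
Proof. exact: (bilin_comp (g := fun x => x) (tm_bilin A3) id_lin (ten_linl c)). Qed.

Lemma reassoc_ten x y c : reassoc A3 (ten x y) c = ten3 x (ten y c).
Proof. by rewrite /reassoc /t tlift_tm //; apply: bilin_reassoc_inner. Qed.
Lemma reassoc_linl c : islin (reassoc A3^~ c).
Proof. exact: tlift_lin (bilin_reassoc_inner c). Qed.
Lemma reassoc_linr z : islin (reassoc A3 z).
Proof.
by apply: islin_tlift_param => x y; apply: islin_comp (ten3_linr x) (ten_linr y).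
Qed.

Section TensorWithIdentity.
Variables (F : AA -> AA) (g : A -> A).
Hypotheses (HF : islin F) (Hg : islin g).

Lemma bilin_ten1_inner a : bilin (fun b c => reassoc A3 (F (ten a b)) (g c)).
Proof.
split=> [c|b] x u v /=; first by rewrite (ten_linr a) HF (reassoc_linl (g c)).
by rewrite Hg reassoc_linr.
Qed.

Lemma bilin_ten1_outer :
  bilin (fun a (w : AA) => tlift (fun b c => reassoc A3 (F (ten a b)) (g c)) w).
Proof.
apply: bilin_tlift => [a|b c x u v /=]; first exact: bilin_ten1_inner.
by rewrite (ten_linl b) HF (reassoc_linl (g c)).
Qed.

Lemma ten1_ten a b c : ten1 F g (ten3 a (ten b c)) = reassoc A3 (F (ten a b)) (g c).
Proof.
rewrite /ten1 /t3 tlift_tm; last exact: bilin_ten1_outer.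
by rewrite /t tlift_tm //; apply: bilin_ten1_inner.
Qed.

Lemma ten1_lin : islin (ten1 (A3:=A3) F g).
Proof. exact: tlift_lin bilin_ten1_outer. Qed.

Lemma bilin_one_ten : bilin (fun a w => ten3 (g a) (F w)).
Proof. exact: bilin_comp (tm_bilin A3) Hg HF. Qed.

Lemma one_ten_ten a w : one_ten g F (ten3 a w) = ten3 (g a) (F w).
Proof. by rewrite /one_ten /t3 tlift_tm //; apply: bilin_one_ten. Qed.

Lemma one_ten_lin : islin (one_ten (A3:=A3) g F).
Proof. exact: tlift_lin bilin_one_ten. Qed.

End TensorWithIdentity.

Lemma ten1_reassoc F z c : islin F -> ten1 F id (reassoc A3 z c) = reassoc A3 (F z) c.
Proof.
move=> HF; apply: (tensor_ext (g1 := fun z => ten1 F id (reassoc A3 z c))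
                             (g2 := fun z => reassoc A3 (F z) c)).
- exact: islin_comp (ten1_lin HF id_lin) (reassoc_linl c).
- exact: islin_comp (reassoc_linl c) HF.
- by move=> x y /=; rewrite reassoc_ten (ten1_ten HF id_lin).
Qed.

Lemma nondeg_eq_l (X Y : A) : (forall a, mul a X = mul a Y) -> X = Y.
Proof.
move=> HXY; apply/eqP; rewrite -subr_eq0; apply/eqP; apply: (A_nondeg_l H) => a.
by rewrite (linB _ _ (mulA_linr a)) HXY subrr.
Qed.

Lemma nondeg_eq_r (X Y : A) : (forall a, mul X a = mul Y a) -> X = Y.
Proof.
move=> HXY; apply/eqP; rewrite -subr_eq0; apply/eqP; apply: (A_nondeg_r H) => a.
by rewrite (linB _ _ (mulA_linl a)) HXY subrr.
Qed.

Lemma A_eq_sum_mul a : exists s : seq (A * A), a = \sum_(p <- s) mul p.1 p.2.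
Proof.
have [y <-] := A_idem H a; have [s ->] := tm_span y.
exists s; rewrite (lin_sum _ _ mu_lin).
by apply: eq_bigr => p _; rewrite mu_ten.
Qed.

Lemma ten_eq_sum_mAA b c : exists s1 s2 : seq (A * A),
  ten b c = \sum_(p <- s1) \sum_(q <- s2) mAA (ten p.1 q.1) (ten p.2 q.2).
Proof.
have [s1 Hb] := A_eq_sum_mul b; have [s2 Hc] := A_eq_sum_mul c; exists s1, s2.
rewrite Hb (lin_sum _ _ (ten_linl _)); apply: eq_bigr => p _.
rewrite Hc (lin_sum _ _ (ten_linr _)); apply: eq_bigr => q _.
by rewrite mAA_ten.
Qed.

Lemma A_trivial : (forall a, eps a = 0) -> forall a : A, a = 0.
Proof.
move=> eps0 a; have [y <-] := A_idem H a; rewrite -(proj1 (ax_iii H _)).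
apply: (tensor_ext (g2 := fun _ => 0)) => [||u v]; first exact: epsl_lin.
- by move=> c x z; rewrite scaler0 addr0.
- by rewrite epsl_ten eps0 scale0r.
Qed.

Lemma counit_witness_or_trivial : (exists e, eps e != 0) \/ (forall a : A, a = 0).
Proof.
have [|no_e] := classic (exists e, eps e != 0); first by left.
right; apply: A_trivial => a; apply/eqP/negPn/negP => eps_a.
by apply: no_e; exists a.
Qed.

Lemma epsl_lmul1b b w : el (lmul1b mul b w) = mul b (el w).
Proof.
apply: (tensor_ext (g1 := fun w => el (lmul1b mul b w)) (g2 := fun w => mul b (el w))).
- exact: islin_comp epsl_lin (lmul1b_lin b).
- exact: islin_comp (mulA_linr b) epsl_lin.
- by move=> u v /=; rewrite lmul1b_ten !epsl_ten (linZ _ _ (mulA_linr b)).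
Qed.

Lemma epsl_rmul1b b w : el (rmul1b mul b w) = mul (el w) b.
Proof.
apply: (tensor_ext (g1 := fun w => el (rmul1b mul b w)) (g2 := fun w => mul (el w) b)).
- exact: islin_comp epsl_lin (rmul1b_lin b).
- exact: islin_comp (mulA_linl b) epsl_lin.
- by move=> u v /=; rewrite rmul1b_ten !epsl_ten (linZ _ _ (mulA_linl b)).
Qed.

Lemma epsr_lmulb1 b w : er (lmulb1 mul b w) = mul b (er w).
Proof.
apply: (tensor_ext (g1 := fun w => er (lmulb1 mul b w)) (g2 := fun w => mul b (er w))).
- exact: islin_comp epsr_lin (lmulb1_lin b).
- exact: islin_comp (mulA_linr b) epsr_lin.
- by move=> u v /=; rewrite lmulb1_ten !epsr_ten (linZ _ _ (mulA_linr b)).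
Qed.

Lemma eps_epsl_epsr w : eps (el w) = eps (er w).
Proof.
apply: (tensor_ext (g1 := fun w => (eps (el w) : k^o)) (g2 := fun w => (eps (er w) : k^o))).
- exact: islin_comp eps_linear epsl_lin.
- exact: islin_comp eps_linear epsr_lin.
- by move=> u v /=; rewrite epsl_ten epsr_ten !epsZ mulrC.
Qed.

Lemma EL_DL p a b : EL (DL p (ten a b)) = DL p (ten a b).
Proof.
have : inspan (fun q : A * A * A => DL q.1.1 (ten q.1.2 q.2)) (DL p (ten a b)).
  by exists [:: (1, (p, a, b))]; rewrite big_cons big_nil scale1r addr0.
move/(ax_iv_l H) => [s ->]; rewrite (lin_sum _ _ EL_lin).
by apply: eq_bigr => q _; rewrite (linZ _ _ EL_lin) (proj1 (E_idem H)).
Qed.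

Lemma ER_DR p a b : ER (DR p (ten a b)) = DR p (ten a b).
Proof.
have : inspan (fun q : A * A * A => DR q.1.1 (ten q.1.2 q.2)) (DR p (ten a b)).
  by exists [:: (1, (p, a, b))]; rewrite big_cons big_nil scale1r addr0.
move/(ax_iv_r H) => [s ->]; rewrite (lin_sum _ _ ER_lin).
by apply: eq_bigr => q _; rewrite (linZ _ _ ER_lin) (proj2 (E_idem H)).
Qed.

Lemma ten1EL_DidL x a b c :
  ten1 EL id (DidL mul DL x (ten3 a (ten b c))) = DidL mul DL x (ten3 a (ten b c)).
Proof.
rewrite /DidL (tlift_comp _ _ (ten1_lin EL_lin id_lin)); apply: eq_tlift => p q.
by rewrite (ten1_ten (DL_lin p) (mulA_linr q)) (ten1_reassoc _ _ EL_lin) EL_DL.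
Qed.

Lemma ten1ER_DidR x a b c :
  ten1 ER id (DidR mul DR x (ten3 a (ten b c))) = DidR mul DR x (ten3 a (ten b c)).
Proof.
rewrite /DidR (tlift_comp _ _ (ten1_lin ER_lin id_lin)); apply: eq_tlift => p q.
by rewrite (ten1_ten (DR_lin p) (mulA_linl q)) (ten1_reassoc _ _ ER_lin) ER_DR.
Qed.

Definition eps_mid (u : A3) : AA := tlift (fun a w => ten a (el w)) u.
Definition eps_first (u : A3) : AA := tlift (fun a (w : AA) => eps a *: w) u.

Lemma bilin_eps_mid : bilin (fun a (w : AA) => ten a (el w)).
Proof. exact: (bilin_comp (g := fun x => x) bilin_ten id_lin epsl_lin). Qed.

Lemma eps_mid_ten3 a w : eps_mid (ten3 a w) = ten a (el w).
Proof. by rewrite /eps_mid /t3 tlift_tm //; apply: bilin_eps_mid. Qed.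
Lemma eps_first_ten3 a w : eps_first (ten3 a w) = eps a *: w.
Proof. by rewrite /eps_first /t3 tlift_tm //; apply: bilin_eps_scale. Qed.
Lemma eps_mid_lin : islin eps_mid. Proof. exact: tlift_lin bilin_eps_mid. Qed.
Lemma eps_first_lin : islin eps_first. Proof. exact: tlift_lin (bilin_eps_scale AA). Qed.

Lemma eps_mid_reassoc z c : eps_mid (reassoc A3 z c) = ten (er z) c.
Proof.
apply: (tensor_ext (g1 := fun z => eps_mid (reassoc A3 z c)) (g2 := fun z => ten (er z) c)).
- exact: islin_comp eps_mid_lin (reassoc_linl c).
- exact: islin_comp (ten_linl c) epsr_lin.
- move=> x y /=; rewrite reassoc_ten eps_mid_ten3 epsl_ten epsr_ten.
  by rewrite (linZ _ _ (ten_linr x)) (linZ _ _ (ten_linl c)).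
Qed.

Lemma eps_first_reassoc z c : eps_first (reassoc A3 z c) = ten (el z) c.
Proof.
apply: (tensor_ext (g1 := fun z => eps_first (reassoc A3 z c)) (g2 := fun z => ten (el z) c)).
- exact: islin_comp eps_first_lin (reassoc_linl c).
- exact: islin_comp (ten_linl c) epsl_lin.
- by move=> x y /=; rewrite reassoc_ten eps_first_ten3 epsl_ten (linZ _ _ (ten_linl c)).
Qed.

Section MultiplicativeCounit.
Hypothesis eps_mul : forall a b, eps (mul a b) = eps a * eps b.

Lemma epsl_mAAr w p q : el (mAA w (ten p q)) = eps p *: mul (el w) q.
Proof.
apply: (tensor_ext (g1 := fun w => el (mAA w (ten p q)))
                   (g2 := fun w => eps p *: mul (el w) q)).
- exact: islin_comp epsl_lin (mAA_linl _).
- exact: islin_scale (islin_comp (mulA_linl q) epsl_lin).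
- move=> u v /=; rewrite mAA_ten !epsl_ten (linZ _ _ (mulA_linl q)) eps_mul scalerA.
  by rewrite mulrC.
Qed.

Lemma epsl_mAAl w p q : el (mAA (ten p q) w) = eps p *: mul q (el w).
Proof.
apply: (tensor_ext (g1 := fun w => el (mAA (ten p q) w))
                   (g2 := fun w => eps p *: mul q (el w))).
- exact: islin_comp epsl_lin (mAA_linr _).
- exact: islin_scale (islin_comp (mulA_linr q) epsl_lin).
- by move=> u v /=; rewrite mAA_ten !epsl_ten (linZ _ _ (mulA_linr q)) eps_mul scalerA.
Qed.

Lemma epsr_mAAr w p q : er (mAA w (ten p q)) = eps q *: mul (er w) p.
Proof.
apply: (tensor_ext (g1 := fun w => er (mAA w (ten p q)))
                   (g2 := fun w => eps q *: mul (er w) p)).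
- exact: islin_comp epsr_lin (mAA_linl _).
- exact: islin_scale (islin_comp (mulA_linl p) epsr_lin).
- move=> u v /=; rewrite mAA_ten !epsr_ten (linZ _ _ (mulA_linl p)) eps_mul scalerA.
  by rewrite mulrC.
Qed.

Lemma epsr_mAAl w p q : er (mAA (ten p q) w) = eps q *: mul p (er w).
Proof.
apply: (tensor_ext (g1 := fun w => er (mAA (ten p q) w))
                   (g2 := fun w => eps q *: mul p (er w))).
- exact: islin_comp epsr_lin (mAA_linr _).
- exact: islin_scale (islin_comp (mulA_linr p) epsr_lin).
- by move=> u v /=; rewrite mAA_ten !epsr_ten (linZ _ _ (mulA_linr p)) eps_mul scalerA.
Qed.

Lemma epsl_DL a b c : el (DL a (ten b c)) = eps b *: mul a c.
Proof.
have [s ->] := A_eq_sum_mul c.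
rewrite (lin_sum _ _ (ten_linr b)) (lin_sum _ _ (DL_lin a)) (lin_sum _ _ epsl_lin).
rewrite (lin_sum _ _ (mulA_linr a)) scaler_sumr; apply: eq_bigr => p _.
rewrite -lmul1b_ten -(proj1 (T1_def H a p.1 _)) epsl_mAAr (proj1 (ax_iii H _)) mu_ten.
by rewrite (mul_assoc H).
Qed.

Lemma epsl_DR c x y : el (DR c (ten x y)) = eps x *: mul y c.
Proof.
apply: nondeg_eq_r => z.
rewrite -epsl_rmul1b -(proj2 (T1_def H c z _)) epsl_mAAl (proj1 (ax_iii H _)) mu_ten.
by rewrite (linZ _ _ (mulA_linl z)) (mul_assoc H).
Qed.

Lemma epsr_DL x p q : er (DL x (ten p q)) = eps q *: mul x p.
Proof.
apply: nondeg_eq_l => z.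
rewrite -epsr_lmulb1 -(proj1 (T2_def H z x _)) epsr_mAAr (proj2 (ax_iii H _)) mu_ten.
by rewrite (linZ _ _ (mulA_linr z)) (mul_assoc H).
Qed.

Lemma epsr_DR b a y : er (DR b (ten a y)) = eps y *: mul a b.
Proof.
have [s ->] := A_eq_sum_mul a.
rewrite (lin_sum _ _ (ten_linl y)) (lin_sum _ _ (DR_lin b)) (lin_sum _ _ epsr_lin).
rewrite (lin_sum _ _ (mulA_linl b)) scaler_sumr; apply: eq_bigr => p _.
rewrite -rmulb1_ten -(proj2 (T2_def H p.2 b _)) epsr_mAAl (proj2 (ax_iii H _)) mu_ten.
by rewrite (mul_assoc H).
Qed.

Lemma epsl_EL w : el (EL w) = el w.
Proof.
apply: (tensor_ext (g1 := fun w => el (EL w)) (g2 := el)) => [||b c].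
- exact: islin_comp epsl_lin EL_lin.
- exact: epsl_lin.
apply: nondeg_eq_l => a.
by rewrite -epsl_lmul1b (ax_vi_1 H) epsl_DL epsl_ten (linZ _ _ (mulA_linr a)).
Qed.

Lemma epsl_ER_ten a b : el (ER (ten a b)) = eps a *: b.
Proof.
apply: nondeg_eq_r => c.
by rewrite -epsl_rmul1b (ax_vi_2 H) epsl_DR (linZ _ _ (mulA_linl c)).
Qed.

Lemma epsl_ER w : el (ER w) = el w.
Proof.
apply: (tensor_ext (g1 := fun w => el (ER w)) (g2 := el)) => [||u v].
- exact: islin_comp epsl_lin ER_lin.
- exact: epsl_lin.
- by rewrite epsl_ER_ten epsl_ten.
Qed.

Lemma eps_mid_oneEL v : eps_mid (one_ten id EL v) = eps_mid v.
Proof.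
apply: (tensor_ext (g1 := fun v => eps_mid (one_ten id EL v)) (g2 := eps_mid)) => [||a w].
- exact: islin_comp eps_mid_lin (one_ten_lin EL_lin id_lin).
- exact: eps_mid_lin.
- by rewrite (one_ten_ten EL_lin id_lin) !eps_mid_ten3 epsl_EL.
Qed.

Lemma eps_mid_oneER v : eps_mid (one_ten id ER v) = eps_mid v.
Proof.
apply: (tensor_ext (g1 := fun v => eps_mid (one_ten id ER v)) (g2 := eps_mid)) => [||a w].
- exact: islin_comp eps_mid_lin (one_ten_lin ER_lin id_lin).
- exact: eps_mid_lin.
- by rewrite (one_ten_ten ER_lin id_lin) !eps_mid_ten3 epsl_ER.
Qed.

Lemma eps_first_oneEL v : eps_first (one_ten id EL v) = EL (eps_first v).
Proof.
apply: (tensor_ext (g1 := fun v => eps_first (one_ten id EL v))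
                   (g2 := fun v => EL (eps_first v))) => [||a w].
- exact: islin_comp eps_first_lin (one_ten_lin EL_lin id_lin).
- exact: islin_comp EL_lin eps_first_lin.
- by rewrite (one_ten_ten EL_lin id_lin) !eps_first_ten3 (linZ _ _ EL_lin).
Qed.

Lemma eps_first_oneER v : eps_first (one_ten id ER v) = ER (eps_first v).
Proof.
apply: (tensor_ext (g1 := fun v => eps_first (one_ten id ER v))
                   (g2 := fun v => ER (eps_first v))) => [||a w].
- exact: islin_comp eps_first_lin (one_ten_lin ER_lin id_lin).
- exact: islin_comp ER_lin eps_first_lin.
- by rewrite (one_ten_ten ER_lin id_lin) !eps_first_ten3 (linZ _ _ ER_lin).
Qed.

Lemma eps_mid_DidL x a b c :
  eps_mid (DidL mul DL x (ten3 a (ten b c))) = eps b *: mAA x (ten a c).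
Proof.
rewrite /DidL (tlift_comp _ _ eps_mid_lin) mAA_tenr -tliftZ; apply: eq_tlift => p q.
by rewrite (ten1_ten (DL_lin p) (mulA_linr q)) eps_mid_reassoc epsr_DL (linZ _ _ (ten_linl _)).
Qed.

Lemma eps_first_DidL x a b c :
  eps_first (DidL mul DL x (ten3 a (ten b c))) = eps a *: mAA x (ten b c).
Proof.
rewrite /DidL (tlift_comp _ _ eps_first_lin) mAA_tenr -tliftZ; apply: eq_tlift => p q.
by rewrite (ten1_ten (DL_lin p) (mulA_linr q)) eps_first_reassoc epsl_DL (linZ _ _ (ten_linl _)).
Qed.

Lemma eps_mid_DidR x a b c :
  eps_mid (DidR mul DR x (ten3 a (ten b c))) = eps b *: mAA (ten a c) x.
Proof.
rewrite /DidR (tlift_comp _ _ eps_mid_lin) mAA_tenl -tliftZ; apply: eq_tlift => p q.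
by rewrite (ten1_ten (DR_lin p) (mulA_linl q)) eps_mid_reassoc epsr_DR (linZ _ _ (ten_linl _)).
Qed.

Lemma eps_first_DidR x a b c :
  eps_first (DidR mul DR x (ten3 a (ten b c))) = eps a *: mAA (ten b c) x.
Proof.
rewrite /DidR (tlift_comp _ _ eps_first_lin) mAA_tenl -tliftZ; apply: eq_tlift => p q.
by rewrite (ten1_ten (DR_lin p) (mulA_linl q)) eps_first_reassoc epsl_DR (linZ _ _ (ten_linl _)).
Qed.

Section CounitWitness.
Variable e : A.
Hypothesis eps_e : eps e != 0.

Lemma EL_mAA_ten x b c : EL (mAA x (ten b c)) = mAA (EL x) (ten b c).
Proof.
have [E3L [E3R [_ _ [E3L_DidL _ _ _] _ [E3L_def _]]]] := ax_v H.
apply: (scalerI eps_e); rewrite -(linZ _ _ EL_lin) -!(eps_first_DidL _ e).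
by rewrite -eps_first_oneEL -ten1EL_DidL E3L_def E3L_DidL.
Qed.

Lemma mAA_EL_ten x a c : mAA (EL x) (ten a c) = mAA x (ten a c).
Proof.
have [E3L [E3R [_ _ [E3L_DidL _ _ _] _ [E3L_def _]]]] := ax_v H.
apply: (scalerI eps_e); rewrite -!(eps_mid_DidL _ _ e).
by rewrite -E3L_DidL -E3L_def ten1EL_DidL eps_mid_oneEL.
Qed.

Lemma ER_mAA_ten x b c : ER (mAA (ten b c) x) = mAA (ten b c) (ER x).
Proof.
have [E3L [E3R [_ _ [_ E3R_DidR _ _] [_ E3R_def] _]]] := ax_v H.
apply: (scalerI eps_e); rewrite -(linZ _ _ ER_lin) -!(eps_first_DidR _ e).
by rewrite -eps_first_oneER -ten1ER_DidR E3R_def E3R_DidR.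
Qed.

Lemma mAA_ten_ER x a c : mAA (ten a c) (ER x) = mAA (ten a c) x.
Proof.
have [E3L [E3R [_ _ [_ E3R_DidR _ _] [_ E3R_def] _]]] := ax_v H.
apply: (scalerI eps_e); rewrite -!(eps_mid_DidR _ _ e).
by rewrite -E3R_DidR -E3R_def ten1ER_DidR eps_mid_oneER.
Qed.

Lemma EL_id x : EL x = x.
Proof.
apply: (tensor_ext (g2 := fun x => x)) => [||u v]; [exact: EL_lin | exact: islin_id |].
rewrite -/(ten u v); have [s1 [s2 ->]] := ten_eq_sum_mAA u v.
rewrite (lin_sum _ _ EL_lin); apply: eq_bigr => p _.
rewrite (lin_sum _ _ EL_lin); apply: eq_bigr => q _.
by rewrite EL_mAA_ten mAA_EL_ten.
Qed.

Lemma ER_id x : ER x = x.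
Proof.
apply: (tensor_ext (g2 := fun x => x)) => [||u v]; [exact: ER_lin | exact: islin_id |].
rewrite -/(ten u v); have [s1 [s2 ->]] := ten_eq_sum_mAA u v.
rewrite (lin_sum _ _ ER_lin); apply: eq_bigr => p _.
rewrite (lin_sum _ _ ER_lin); apply: eq_bigr => q _.
by rewrite ER_mAA_ten mAA_ten_ER.
Qed.

Lemma PiL_l_counit a b : PiL_l eps T2 a b = eps a *: b.
Proof.
apply: nondeg_eq_l => q; apply: (scalerI eps_e).
rewrite -epsl_mAAl (proj2 (T2_def H a b _)) rmulb1_ten epsl_DR eps_mul.
by rewrite (linZ _ _ (mulA_linr q)) !scalerA.
Qed.

Lemma PiR_r_counit a b : PiR_r eps T1 a b = eps a *: b.
Proof.
apply: nondeg_eq_r => p; apply: (scalerI eps_e).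
rewrite -(epsr_mAAr _ p e) (proj1 (T1_def H b a _)) lmul1b_ten epsr_DL eps_mul.
by rewrite (linZ _ _ (mulA_linl p)) !scalerA mulrC.
Qed.

End CounitWitness.

Lemma E_id_of_eps_mul : (forall x, EL x = x) /\ (forall x, ER x = x).
Proof.
have [[e eps_e]|A0] := counit_witness_or_trivial.
  by split; [apply: EL_id eps_e | apply: ER_id eps_e].
by have AA0 := tensor_trivial (T:=AA) A0; split=> x; rewrite [LHS]AA0 [RHS]AA0.
Qed.

Lemma PiL_of_eps_mul a :
  (forall b, PiL_l eps T2 a b = eps a *: b) /\ (forall b, PiL_r eps ER a b = eps a *: b).
Proof.
have [[e eps_e]|A0] := counit_witness_or_trivial; last by split=> b; rewrite [LHS]A0 [RHS]A0.
by split=> b; [exact: (PiL_l_counit eps_e) | exact: epsl_ER_ten].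
Qed.

Lemma PiR_of_eps_mul a :
  (forall b, PiR_l eps EL a b = eps a *: b) /\ (forall b, PiR_r eps T1 a b = eps a *: b).
Proof.
have [[e eps_e]|A0] := counit_witness_or_trivial; last by split=> b; rewrite [LHS]A0 [RHS]A0.
split=> b; last exact: (PiR_r_counit eps_e).
by rewrite /PiR_l (EL_id eps_e) epsr_ten.
Qed.

End MultiplicativeCounit.

Lemma eps_mul_of_ER_id : (forall x, ER x = x) -> forall a b, eps (mul a b) = eps a * eps b.
Proof.
move=> ER_1.
pose epsl_at a' (X : AA) : A := tlift (fun u v => eps (mul a' u) *: v) X.
have bilin_at a' : bilin (fun u (v : A) => eps (mul a' u) *: v).
  exact: (bilin_comp (h := fun x => x) (bilin_eps_scale A) (mulA_linr a') id_lin).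
have epsl_at_ten a' u v : epsl_at a' (ten u v) = eps (mul a' u) *: v.
  by rewrite /epsl_at /t tlift_tm.
have epsl_mAA_at a' b X : el (mAA (ten a' b) X) = mul b (epsl_at a' X).
  apply: (tensor_ext (g1 := fun X => el (mAA (ten a' b) X))
                     (g2 := fun X => mul b (epsl_at a' X))) => [||u v].
  - exact: islin_comp epsl_lin (mAA_linr _).
  - exact: islin_comp (mulA_linr b) (tlift_lin (bilin_at a')).
  - by rewrite mAA_ten epsl_ten epsl_at_ten (linZ _ _ (mulA_linr b)).
have eps_epsl_at a' X : eps (epsl_at a' X) = eps (mul a' (er X)).
  apply: (tensor_ext (g1 := fun X => (eps (epsl_at a' X) : k^o))
                     (g2 := fun X => (eps (mul a' (er X)) : k^o))) => [||u v].
  - exact: islin_comp eps_linear (tlift_lin (bilin_at a')).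
  - exact: islin_comp eps_linear (islin_comp (mulA_linr a') epsr_lin).
  - by rewrite epsl_at_ten epsr_ten (linZ _ _ (mulA_linr a')) !epsZ mulrC.
have epsl_at_T2 a' a c : epsl_at a' (T2 (ten a c)) = eps (mul a' a) *: c.
  apply: nondeg_eq_l => b; rewrite -epsl_mAA_at (proj2 (T2_def H a c _)) rmulb1_ten.
  by rewrite -(ax_vi_2 H) ER_1 rmul1b_ten epsl_ten (linZ _ _ (mulA_linr b)).
have eps_mul3 a' a c : eps (mul a' (mul a c)) = eps (mul a' a) * eps c.
  by rewrite -[mul a c]mu_ten -(proj2 (ax_iii H _)) -eps_epsl_at epsl_at_T2 epsZ.
move=> x c; have [s ->] := A_eq_sum_mul x.
rewrite (lin_sum _ _ (mulA_linl c)) (lin_sum _ _ eps_linear) (lin_sum _ _ eps_linear).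
by rewrite mulr_suml; apply: eq_bigr => p _; rewrite -(mul_assoc H) eps_mul3.
Qed.

Lemma eps_mul_of_PiL_l : (forall a b, PiL_l eps T2 a b = eps a *: b) ->
  forall a b, eps (mul a b) = eps a * eps b.
Proof.
move=> PiL_1 a b.
by rewrite -mu_ten -(proj2 (ax_iii H _)) -eps_epsl_epsr -/(PiL_l eps T2 a b) PiL_1 epsZ.
Qed.

Lemma eps_mul_of_PiR_r : (forall a b, PiR_r eps T1 a b = eps a *: b) ->
  forall a b, eps (mul a b) = eps a * eps b.
Proof.
move=> PiR_1 a b.
by rewrite -mu_ten -(proj1 (ax_iii H _)) eps_epsl_epsr -/(PiR_r eps T1 b a) PiR_1 epsZ mulrC.
Qed.

End WeakMultiplierBialgebra.

Theorem theorem2p11 (k : fieldType) (A : lmodType k) (mul : A -> A -> A)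
  (AA : tensor A A) (A3 : tensor A AA)
  (EL ER : AA -> AA) (DL DR : A -> AA -> AA) (eps : A -> k)
  (T1 T2 : AA -> AA) :
  is_wmba mul A3 eps EL ER DL DR T1 T2 ->
  [<-> (forall x, EL x = x) /\ (forall x, ER x = x);
       forall a b, eps (mul a b) = eps a * eps b;
       forall a, (forall b, PiL_l eps T2 a b = eps a *: b) /\
                 (forall b, PiL_r eps ER a b = eps a *: b);
       forall a, (forall b, PiR_l eps EL a b = eps a *: b) /\
                 (forall b, PiR_r eps T1 a b = eps a *: b)].
Proof.
move=> H; split; [|split; [|split]].
- by case=> _ /(eps_mul_of_ER_id H).
- exact: PiL_of_eps_mul H.
- move=> PiL_1; apply: (PiR_of_eps_mul H); apply: (eps_mul_of_PiL_l H) => a b.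
  by case: (PiL_1 a).
- move=> PiR_1; apply: (E_id_of_eps_mul H); apply: (eps_mul_of_PiR_r H) => a b.
  by case: (PiR_1 a).
Qed.
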